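(* Let $X = \mathbb{Z}_m$ be the cyclic rack of order $m$, i.e. the set $\mathbb{Z}_m$ with operation $xy = x+1 \pmod m$ (a Rump right quasigroup with $x/y = x-1$), and let $R(x,y) = (y(x/y), x/y) = (y+1, x-1)$ be its associated solution of the Yang-Baxter equation, with set-theoretic Yang-Baxter chain complex $(C^{YB}_n(X),\partial^{YB}_n)$ (defined in the context). Identify a tuple $(a_1,\ldots,a_n)$ with $a_1\otimes\cdots\otimes a_n$, extended multilinearly to formal $\mathbb{Z}$-combinations of elements of $X$ in each slot. Define $\kappa_n: C^{YB}_n(X)\to C^{YB}_n(X)$ on generators by $$\kappa_n(x_1,\ldots,x_n) = (x_1 - x_2x_2)\otimes(x_2 - x_3x_3)\otimes\cdots\otimes(x_{n-1}-x_nx_n)\otimes x_n$$ (so $\kappa_1$ and $\kappa_0$ are the identity), where $x_jx_j$ denotes the product in $X$. Then $\kappa_* = (\kappa_n)_n$ is a chain map: $\partial^{YB}_n\circ\kappa_n = \kappa_{n-1}\circ\partial^{YB}_n$ for all $n$.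
   Context: For a set $X$ and a map $R: X\times X\to X\times X$ with components $R(x,y)=(\nu(x,y),\mu(x,y))$, the set-theoretic Yang-Baxter chain complex is: $C^{YB}_n(X)$ the free abelian group on $X^n$ ($n\ge0$). Face maps $d^l_{i,n}, d^r_{i,n}: X^n\to X^{n-1}$, $1\le i\le n$: $d^l_{1,n}$ deletes the first coordinate; for $i\ge2$, $d^l_{i,n}$ applies $R$ at positions $(i-1,i)$, then $(i-2,i-1)$, ..., then $(2,3)$, then replaces the first two coordinates $(a,b)$ by $\mu(a,b)$. $d^r_{n,n}$ deletes the last coordinate; for $i\le n-1$, $d^r_{i,n}$ applies $R$ at positions $(i,i+1)$, then $(i+1,i+2)$, ..., $(n-2,n-1)$, then replaces the last two coordinates $(a,b)$ by $\nu(a,b)$. The boundary is $\partial^{YB}_n=\sum_{i=1}^n(-1)^{i+1}(d^l_{i,n}-d^r_{i,n})$. *)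

From mathcomp Require Import all_boot all_order all_algebra.
Set Implicit Arguments. Unset Strict Implicit. Unset Printing Implicit Defensive.
Import GRing.Theory.
Local Open Scope ring_scope.

(* The cyclic rack of order m.+1 : X = Z_(m+1) represented as 'I_m.+1. *)
Definition X (m : nat) := 'I_m.+1.

Definition rop (m : nat) (x y : X m) : X m := ordS x.
Definition rdiv (m : nat) (x y : X m) : X m := ord_pred x.

(* R(x,y) = (y (x/y), x/y) = (nu x y, mu x y) *)
Definition nu (m : nat) (x y : X m) : X m := rop y (rdiv x y).
Definition mu (m : nat) (x y : X m) : X m := rdiv x y.

(* apply R at 0-indexed positions (k, k+1) of a word *)
Definition applyR (m : nat) (k : nat) (s : seq (X m)) : seq (X m) :=
  take k s ++ (match drop k s with
               | a :: b :: r => nu a b :: mu a b :: r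
               | r => r end).

Fixpoint downR (m : nat) (j : nat) (s : seq (X m)) : seq (X m) :=
  match j with 0 => s | j'.+1 => downR j' (applyR j s) end.

Fixpoint upR (m : nat) (k c : nat) (s : seq (X m)) : seq (X m) :=
  match c with 0 => s | c'.+1 => upR k.+1 c' (applyR k s) end.

(* left face d^l_{i,n}, 1 <= i <= n (1-indexed as in the paper) *)
Definition dl (m : nat) (i : nat) (s : seq (X m)) : seq (X m) :=
  if (i <= 1)%N then behead s
  else match downR (i - 2)%N s with
       | a :: b :: r => mu a b :: r
       | s' => s' end.

(* right face d^r_{i,n}, 1 <= i <= n *)
Definition dr (m : nat) (n i : nat) (s : seq (X m)) : seq (X m) :=
  if i == n then take (n - 1)%N s
  else match rev (upR (i - 1)%N (n - 1 - i)%N s) with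
       | b :: a :: r => rcons (rev r) (nu a b)
       | r => rev r end.

(* C_n^{YB}(X) : free abelian group on X^n, as integer coefficient functions *)
Definition chain (m n : nat) := {ffun n.-tuple (X m) -> int}.

Definition gen (m n : nat) (s : seq (X m)) : chain m n :=
  [ffun t : n.-tuple (X m) => ((tval t == s) : int)%:~R].

Definition linext (m n k : nat) (f : n.-tuple (X m) -> chain m k)
  (c : chain m n) : chain m k :=
  [ffun u => \sum_(t : n.-tuple (X m)) c t * f t u].

Definition bd_gen (m n : nat) (t : n.-tuple (X m)) : chain m n.-1 :=
  [ffun u => \sum_(1 <= i < n.+1)
     (-1) ^+ (i.+1)%N * (gen n.-1 (dl i t) u - gen n.-1 (dr n i t) u)].

Definition bd (m n : nat) (c : chain m n) : chain m n.-1 := linext (@bd_gen m n) c.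

(* tensor product of formal Z-combinations v_0, ..., v_{n-1} of elements of X *)
Definition tens (m n : nat) (v : 'I_n -> X m -> int) : chain m n :=
  [ffun t : n.-tuple (X m) => \prod_(i < n) v i (tnth t i)].

Definition delta (m : nat) (x : X m) : X m -> int := fun y => ((y == x) : int)%:~R.

Definition kappa_gen (m n : nat) (t : n.-tuple (X m)) : chain m n :=
  tens (fun i : 'I_n =>
    if (i.+1 < n)%N then
      (fun y => delta (tnth t i) y
                - delta (rop (nth ord0 t i.+1) (nth ord0 t i.+1)) y)
    else delta (tnth t i)).

Definition kappa (m n : nat) (c : chain m n) : chain m n := linext (@kappa_gen m n) c.

From mathcomp Require Import all_boot all_order all_algebra.
From mathcomp Require Import zify ring.
Set Implicit Arguments. Unset Strict Implicit. Unset Printing Implicit Defensive.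
Import GRing.Theory.

(* By linearity it suffices to compare both sides on a generator [t] of length
   [N + 1], evaluated at a word [u] of length [N].  The chain [kappa t] is a
   pure tensor of factors [k_j = d(x_j) - d(x_(j+1) + 1)] for [j < N] and
   [k_N = d(x_N)], where [d] is the Dirac function.  The face [d^l_i] deletes
   coordinate [i] and shifts the earlier ones by [-1], the face [d^r_i]
   deletes it and shifts the later ones by [+1]; pushing a pure tensor forward
   along a face sums out the deleted factor, which is [0] unless it is the
   last one.  So only [i = N + 1] contributes to [bd (kappa t)].  Conversely,
   [kappa] of the [i]-th face of [t] is a product whose factors are (shifted)
   [k_j] before the deleted position and [k_(j+1)] after it, merging into a
   sum at the deleted position; the alternating sum over [i] of these
   products telescopes to the same value [(-1)^N (prod_j k_j(u_j + 1) -
   prod_j k_j(u_j))]. *)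

Ltac case_ifs := repeat (case: ifP => ?); try (exfalso; lia); try done.

Section FaceCoordinates.
Variable m : nat.
Local Notation T := (X m).
Local Notation x0 := (ord0 : T).
Local Notation sg := (@ordS m.+1).
Local Notation pi := (@ord_pred m.+1).

Lemma size_applyR k (s : seq T) : size (applyR k s) = size s.
Proof.
rewrite /applyR -{3}(cat_take_drop k s) !size_cat; congr (_ + _).
by case: (drop k s) => [|a [|b r]].
Qed.

Lemma nth_applyR k (s : seq T) j : k.+1 < size s ->
  nth x0 (applyR k s) j =
  if j == k then sg (nth x0 s k.+1)
  else if j == k.+1 then pi (nth x0 s k) else nth x0 s j.
Proof.
move=> hk; rewrite /applyR (drop_nth x0 (ltnW hk)) (drop_nth x0 hk).
rewrite nth_cat size_take (ltnW hk).
case: (ltngtP j k) => [hjk|hkj|->]; last by rewrite subnn.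
  by rewrite nth_take //; case_ifs.
have [d ->] : exists d, j = k + d.+1 by exists (j - k).-1; lia.
rewrite addKn; case: d => [|d] /=; first by rewrite addn1 eqxx.
by rewrite nth_drop; case_ifs; congr nth; lia.
Qed.

Lemma size_downR k (s : seq T) : size (downR k s) = size s.
Proof. by elim: k s => [|k IH] s //=; rewrite IH size_applyR. Qed.

Lemma size_upR k c (s : seq T) : size (upR k c s) = size s.
Proof. by elim: c k s => [|c IH] k s //=; rewrite IH size_applyR. Qed.

(* Coordinate 1 is left out: [dl] discards it through [mu]. *)
Lemma nth_downR k (s : seq T) j : k.+1 < size s -> j != 1 ->
  nth x0 (downR k s) j =
  if j == 0 then nth x0 s 0 else if j <= k.+1 then pi (nth x0 s j.-1) else nth x0 s j.
Proof.
elim: k s j => [|k IH] s j hk hj /=; first by case: j hj => [|[|j]].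
rewrite IH ?size_applyR //; last by lia.
case: j hj => [|[|j]] //= _; first by rewrite nth_applyR.
rewrite !nth_applyR //; case_ifs; by have -> : j.+1 = k.+1 by lia.
Qed.

(* Coordinate [k + c] is left out: [dr] discards it through [nu]. *)
Lemma nth_upR k c (s : seq T) j : k + c < size s -> j != k + c ->
  nth x0 (upR k c s) j =
  if j < k then nth x0 s j else if j < k + c then sg (nth x0 s j.+1) else nth x0 s j.
Proof.
elim: c k s j => [|c IH] k s j hk hj /=; first by case_ifs.
rewrite IH ?size_applyR //; try lia.
have hk' : k.+1 < size s by lia.
by rewrite !(nth_applyR _ hk'); case_ifs; have -> : j = k by lia.
Qed.

Lemma size_dl i (s : seq T) : 0 < i <= size s -> size (dl i s) = (size s).-1.
Proof.
rewrite /dl; case: ifP => [_ _|hi1 hi]; first exact: size_behead.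
by move: (size_downR (i - 2) s); case: (downR _ s) => [|a [|b r]] /= hsz; lia.
Qed.

Lemma nth_dl i (s : seq T) j : 0 < i <= size s ->
  nth x0 (dl i s) j = if j.+1 < i then pi (nth x0 s j) else nth x0 s j.+1.
Proof.
rewrite /dl; case: ifP => hi1 hi; first by rewrite nth_behead; case_ifs.
have hk : (i - 2).+1 < size s by lia.
move: (@nth_downR (i - 2) s 0 hk isT) (fun j => @nth_downR (i - 2) s j.+2 hk isT).
case: (downR (i - 2) s) (size_downR (i - 2) s) => [|a [|b r]] /= hsz h0 hj; try lia.
case: j => [|j] /=; first by rewrite h0 /mu /rdiv; case_ifs.
by rewrite hj; case_ifs; congr (pi (nth _ _ _)); lia.
Qed.

Lemma dr_lastE (w : seq T) a b :
  match rev (rcons (rcons w a) b) with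
  | b :: a :: r => rcons (rev r) (nu a b) | r => rev r end = rcons w (sg b).
Proof. by rewrite !rev_rcons /= revK. Qed.

Lemma size_dr n i (s : seq T) : size s = n -> 0 < i <= n -> size (dr n i s) = n.-1.
Proof.
move=> hs hi; rewrite /dr; case: eqP => [_|hin].
  by rewrite size_take hs; case_ifs; lia.
move: (size_upR (i - 1) (n - 1 - i) s); rewrite hs.
case/lastP: (upR _ _ s) => [|w b]; first by move=> /= ?; lia.
case/lastP: w => [|w a]; first by rewrite size_rcons /=; lia.
by rewrite dr_lastE !size_rcons => <-.
Qed.

Lemma nth_dr n i (s : seq T) j : size s = n -> 0 < i <= n -> j < n.-1 ->
  nth x0 (dr n i s) j = if j.+1 < i then nth x0 s j else sg (nth x0 s j.+1).
Proof.
move=> hs hi hj; rewrite /dr; case: eqP => [hin|hin].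
  by rewrite nth_take; case_ifs; lia.
have hk : i - 1 + (n - 1 - i) < size s by lia.
have hw j' := @nth_upR (i - 1) (n - 1 - i) s j' hk.
move: (size_upR (i - 1) (n - 1 - i) s) hw; rewrite hs.
case/lastP: (upR _ _ s) => [|w b]; first by move=> /= ?; lia.
case/lastP: w => [|w a]; first by rewrite size_rcons /=; lia.
rewrite dr_lastE !size_rcons => hsz hw.
rewrite nth_rcons; case: ifP => hjw.
  have /hw : j != i - 1 + (n - 1 - i) by lia.
  by rewrite !nth_rcons !size_rcons; case_ifs.
have /hw : n.-1 != i - 1 + (n - 1 - i) by lia.
rewrite !nth_rcons !size_rcons; case_ifs => ->; congr (sg (nth _ _ _)); lia.
Qed.
End FaceCoordinates.

Local Open Scope ring_scope.

Section ProductsOverTuples.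
Variables (R : comPzRingType) (T : finType) (x0 : T).

Lemma prod_nat_bump p N (H : nat -> R) : (p <= N)%N ->
  \prod_(0 <= k < N.+1) H k = H p * \prod_(0 <= j < N) H (bump p j).
Proof. by move=> hp; rewrite !big_mkord (bigD1_ord (Ordinal (hp : (p < N.+1)%N))). Qed.

Lemma sum_tuple_prod n (F : nat -> T -> R) :
  \sum_(s : n.-tuple T) \prod_(0 <= j < n) F j (nth x0 s j) =
  \prod_(0 <= j < n) \sum_(y : T) F j y.
Proof.
rewrite !big_mkord bigA_distr_bigA /=.
rewrite (reindex (fun s : n.-tuple T => [ffun j : 'I_n => tnth s j])) /=.
  apply: eq_bigr => s _; rewrite big_mkord; apply: eq_bigr => j _.
  by rewrite ffunE (tnth_nth x0).
apply: onW_bij; exists (fun f : {ffun 'I_n -> T} => [tuple f j | j < n]).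
  by move=> s; apply: eq_from_tnth => j; rewrite tnth_mktuple ffunE.
by move=> f; apply/ffunP => j; rewrite !ffunE tnth_mktuple.
Qed.

Lemma eqseq_prod_nth n (a b : seq T) : size a = n -> size b = n ->
  (a == b)%:R = \prod_(0 <= j < n) (nth x0 a j == nth x0 b j)%:R :> R.
Proof.
elim: n a b => [|n IH] [|x a] [|y b] //=; first by rewrite big_geq.
by move=> [ha] [hb]; rewrite big_ltn // big_add1 eqseq_cons -mulnb natrM (IH a b).
Qed.

Lemma sum_mul_eq_can (g g' : T -> T) (F : T -> R) a :
  cancel g g' -> cancel g' g -> \sum_(y : T) F y * (a == g y)%:R = F (g' a).
Proof.
move=> gK g'K; rewrite (bigD1 (g' a)) //= g'K eqxx mulr1 big1 ?addr0 // => y hy.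
rewrite (_ : (a == g y) = false) ?mulr0 //.
by apply/negbTE; apply: contra hy => /eqP ->; rewrite gK.
Qed.

Lemma sum_mul_eq (F : T -> R) a : \sum_(y : T) F y * (a == y)%:R = F a.
Proof. exact: (@sum_mul_eq_can id id). Qed.

Lemma sum_prod_fibre_delete N p (phi : seq T -> seq T) (f : nat -> T -> T)
    (F : nat -> T -> R) (u : seq T) :
  (p <= N)%N -> size u = N ->
  (forall s : N.+1.-tuple T, size (phi s) = N) ->
  (forall (s : N.+1.-tuple T) j,
     (j < N)%N -> nth x0 (phi s) j = f j (nth x0 s (bump p j))) ->
  \sum_(s : N.+1.-tuple T) (\prod_(0 <= j < N.+1) F j (nth x0 s j)) * (u == phi s)%:R =
  (\sum_(y : T) F p y) *
  \prod_(0 <= j < N) \sum_(y : T) F (bump p j) y * (nth x0 u j == f j y)%:R.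
Proof.
move=> hp hu hphi phiE.
pose G k y := F k y *
  (if k == p then 1 else (nth x0 u (unbump p k) == f (unbump p k) y)%:R).
have Gp y : G p y = F p y by rewrite /G eqxx mulr1.
have GE j y : G (bump p j) y = F (bump p j) y * (nth x0 u j == f j y)%:R.
  by rewrite /G eq_sym (negbTE (neq_bump p j)) bumpK.
rewrite [RHS](_ : _ = \prod_(0 <= k < N.+1) \sum_(y : T) G k y); last first.
  rewrite (prod_nat_bump _ hp); congr (_ * _).
    by apply: eq_bigr => y _; rewrite Gp.
  by apply: eq_bigr => j _; apply: eq_bigr => y _; rewrite GE.
rewrite -sum_tuple_prod; apply: eq_bigr => s _.
rewrite (eqseq_prod_nth hu (hphi s)) (prod_nat_bump _ hp) [in RHS](prod_nat_bump _ hp).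
rewrite Gp -mulrA -big_split /=; congr (_ * _).
by apply: eq_big_nat => j /andP[_ hj]; rewrite GE phiE.
Qed.

End ProductsOverTuples.

Section AlternatingSplice.
Variable R : comPzRingType.

Definition splice (a b : nat -> R) (i j : nat) : R :=
  if (j.+2 < i)%N then a j else if j.+2 == i then a j + b j else b j.

Lemma prod_splice a b N k : (k < N)%N ->
  \prod_(0 <= j < N) splice a b k.+2 j =
  \prod_(0 <= j < N) (if (j < k.+1)%N then a j else b j) +
  \prod_(0 <= j < N) (if (j < k)%N then a j else b j).
Proof.
move=> hk; rewrite !big_mkord.
rewrite (bigD1 (Ordinal hk)) // [L in _ = L + _](bigD1 (Ordinal hk)) //.
rewrite [L in _ = _ + L](bigD1 (Ordinal hk)) //= /splice ltnn eqxx ltnSn ltnn mulrDl.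
by congr (_ * _ + _ * _); apply: eq_bigr => j; rewrite -val_eqE /= => hjk; case_ifs.
Qed.

Lemma sum_alt_prod_splice a b N :
  \sum_(1 <= i < N.+2) (-1) ^+ i.+1 * \prod_(0 <= j < N) splice a b i j =
  (-1) ^+ N * \prod_(0 <= j < N) a j.
Proof.
pose Q k := \prod_(0 <= j < N) (if (j < k)%N then a j else b j).
(* Since [prod_splice] writes face [k.+2] as [Q k.+1 + Q k], the sum telescopes. *)
pose g i := if i is k.+2 then (-1) ^+ k * Q k else 0.
rewrite (telescope_sumr_eq g) // => [|[|[|k]] // /andP[_ hk]].
- rewrite /g subr0; congr (_ * _); apply: eq_big_nat => j /andP[_ ->] //.
- rewrite /g subr0 /Q expr0 mul1r sqrrN expr1n mul1r.
  by apply: eq_bigr => j _; rewrite /splice.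
- by rewrite /g /Q prod_splice // !exprS; ring.
Qed.

End AlternatingSplice.

Section KappaChainMap.
Variable m : nat.
Local Notation T := (X m).
Local Notation x0 := (ord0 : T).
Local Notation sg := (@ordS m.+1).
Local Notation pi := (@ord_pred m.+1).

Lemma linext_comp n k l (f : k.-tuple T -> chain m l) (g : n.-tuple T -> chain m k)
    (c : chain m n) :
  linext f (linext g c) = linext (fun t => linext f (g t)) c.
Proof.
apply/ffunP => u; rewrite !ffunE.
under eq_bigr => s _ do rewrite ffunE big_distrl /=.
rewrite exchange_big /=; apply: eq_bigr => t _.
by rewrite ffunE big_distrr /=; apply: eq_bigr => s _; rewrite mulrA.
Qed.

Lemma eq_linext n k (f g : n.-tuple T -> chain m k) : f =1 g -> linext f =1 linext g.
Proof.
by move=> fg c; apply/ffunP => u; rewrite !ffunE; apply: eq_bigr => t _; rewrite fg.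
Qed.

Lemma genE n (w : seq T) (u : n.-tuple T) : gen n w u = (tval u == w)%:R.
Proof. by rewrite ffunE; case: eqP. Qed.

Lemma sum_gen_mul n (w : seq T) (G : seq T -> int) : size w = n ->
  \sum_(s : n.-tuple T) gen n w s * G s = G w.
Proof.
move=> hw; rewrite (bigD1 (Tuple (introT eqP hw))) //= genE eqxx mul1r big1 ?addr0 //.
move=> s hs; rewrite genE (_ : (tval s == w) = false) ?mul0r //.
by apply/negbTE; apply: contra hs => /eqP h; apply/eqP/val_inj.
Qed.


Lemma deltaE (a y : T) : delta a y = (y == a)%:R.
Proof. by rewrite /delta; case: eqP. Qed.

Lemma delta_ord_predl (a y : T) : delta (pi a) y = delta a (sg y).
Proof. by rewrite !deltaE (can2_eq (@ordSK _) (@ord_predK _)). Qed.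

Lemma delta_ordS (a y : T) : delta (sg a) (sg y) = delta a y.
Proof. by rewrite !deltaE (inj_eq (@ordS_inj _)). Qed.

Lemma delta_ord_predr (a y : T) : delta a (pi y) = delta (sg a) y.
Proof. by rewrite -delta_ordS ord_predK. Qed.

Lemma sum_delta (a : T) : \sum_(y : T) delta a y = 1.
Proof.
rewrite (bigD1 a) //= big1 ?addr0; first by rewrite deltaE eqxx.
by move=> y /negbTE hy; rewrite deltaE hy.
Qed.

(* [rop x x = x + 1], so this is the [j]-th tensor factor of [kappa_gen w]. *)
Definition kappa_factor (w : seq T) (j : nat) (y : T) : int :=
  if (j.+1 < size w)%N then delta (nth x0 w j) y - delta (sg (nth x0 w j.+1)) y
  else delta (nth x0 w j) y.

Lemma kappa_genE n (t s : n.-tuple T) :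
  kappa_gen t s = \prod_(0 <= j < n) kappa_factor t j (nth x0 s j).
Proof.
rewrite big_mkord ffunE; apply: eq_bigr => j _.
by rewrite /kappa_factor size_tuple !(tnth_nth x0) /rop; case: ifP.
Qed.

Lemma sum_kappa_factor (w : seq T) j : (j < size w)%N ->
  \sum_(y : T) kappa_factor w j y = (j.+1 == size w)%:R.
Proof.
move=> hw; rewrite /kappa_factor; case: ltnP => hj.
  by rewrite sumrB !sum_delta subrr ltn_eqF.
by rewrite sum_delta (_ : j.+1 = size w) ?eqxx //; lia.
Qed.

Lemma kappa_factor_dl n (t : seq T) i j y :
  size t = n -> (0 < i <= n)%N -> (j.+1 < n)%N ->
  kappa_factor (dl i t) j y =
  splice (fun j => kappa_factor t j (sg y)) (fun j => kappa_factor t j.+1 y) i j.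
Proof.
move=> hs hi hj; rewrite /kappa_factor /splice size_dl ?hs // !nth_dl ?hs //.
by case_ifs; rewrite ?delta_ord_predl ?delta_ordS ?ord_predK; ring.
Qed.

Lemma kappa_factor_dr n (t : seq T) i j y :
  size t = n -> (0 < i <= n)%N -> (j.+1 < n)%N ->
  kappa_factor (dr n i t) j y =
  splice (fun j => kappa_factor t j y) (fun j => kappa_factor t j.+1 (pi y)) i j.
Proof.
move=> hs hi hj; rewrite /kappa_factor /splice size_dr // hs.
by case_ifs; rewrite ?nth_dr //=; try lia; case_ifs; rewrite ?delta_ord_predr; ring.
Qed.

Lemma sum_kappa_gen_dl N (t : N.+1.-tuple T) (u : N.-tuple T) i : (0 < i <= N.+1)%N ->
  \sum_(s : N.+1.-tuple T) kappa_gen t s * gen N (dl i s) u =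
  (i == N.+1)%:R * \prod_(0 <= j < N) kappa_factor t j (sg (nth x0 u j)).
Proof.
move=> hi; under [LHS]eq_bigr => s _ do rewrite kappa_genE genE.
rewrite (@sum_prod_fibre_delete _ _ _ N i.-1 (dl i)
          (fun j y => if (j < i.-1)%N then pi y else y) (kappa_factor t)) ?size_tuple //.
- rewrite sum_kappa_factor ?size_tuple; last by lia.
  rewrite prednK; last by lia.
  case: eqP => [->|_]; last by rewrite !mul0r.
  rewrite !mul1r; apply: eq_big_nat => j /andP[_ hj].
  by rewrite /bump leqNgt hj add0n (sum_mul_eq_can _ _ (@ord_predK _) (@ordSK _)).
- by lia.
- by move=> s; rewrite size_dl size_tuple //; lia.
- move=> s j hj; rewrite nth_dl ?size_tuple; last by lia.
  by rewrite /bump; case: (ltnP j i.-1) => hji; rewrite ?add0n ?add1n; case_ifs.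
Qed.

Lemma sum_kappa_gen_dr N (t : N.+1.-tuple T) (u : N.-tuple T) i : (0 < i <= N.+1)%N ->
  \sum_(s : N.+1.-tuple T) kappa_gen t s * gen N (dr N.+1 i s) u =
  (i == N.+1)%:R * \prod_(0 <= j < N) kappa_factor t j (nth x0 u j).
Proof.
move=> hi; under [LHS]eq_bigr => s _ do rewrite kappa_genE genE.
rewrite (@sum_prod_fibre_delete _ _ _ N i.-1 (dr N.+1 i)
          (fun j y => if (j < i.-1)%N then y else sg y) (kappa_factor t)) ?size_tuple //.
- rewrite sum_kappa_factor ?size_tuple; last by lia.
  rewrite prednK; last by lia.
  case: eqP => [->|_]; last by rewrite !mul0r.
  rewrite !mul1r; apply: eq_big_nat => j /andP[_ hj].
  by rewrite /bump leqNgt hj add0n sum_mul_eq.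
- by lia.
- by move=> s; rewrite size_dr ?size_tuple.
- move=> s j hj; rewrite nth_dr ?size_tuple //.
  by rewrite /bump; case: (ltnP j i.-1) => hji; rewrite ?add0n ?add1n; case_ifs.
Qed.

Lemma bd_kappa_genE N (t : N.+1.-tuple T) (u : N.-tuple T) :
  bd (kappa_gen t) u =
  (-1) ^+ N * (\prod_(0 <= j < N) kappa_factor t j (sg (nth x0 u j)) -
               \prod_(0 <= j < N) kappa_factor t j (nth x0 u j)).
Proof.
set A := \prod_(0 <= j < N) _; set B := \prod_(0 <= j < N) _.
rewrite ffunE; under eq_bigr => s _ do rewrite [bd_gen _ _]ffunE big_distrr /=.
rewrite exchange_big /=.
rewrite (eq_big_nat _ _ (F2 := fun i => (-1) ^+ i.+1 * (i == N.+1)%:R * (A - B))).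
  rewrite big_nat_recr //= eqxx big1_seq ?add0r => [|i /andP[_]].
    by rewrite !exprS mulr1; ring.
  by rewrite mem_index_iota => /andP[_ /ltn_eqF ->]; rewrite mulr0 mul0r.
move=> i hi; under eq_bigr => s _ do rewrite mulrCA mulrBr.
by rewrite -big_distrr sumrB /= sum_kappa_gen_dl // sum_kappa_gen_dr // /A /B; ring.
Qed.

Lemma kappa_bd_genE N (t : N.+1.-tuple T) (u : N.-tuple T) :
  kappa (bd_gen t) u =
  (-1) ^+ N * (\prod_(0 <= j < N) kappa_factor t j (sg (nth x0 u j)) -
               \prod_(0 <= j < N) kappa_factor t j (nth x0 u j)).
Proof.
rewrite ffunE.
under [LHS]eq_bigr => s _ do rewrite [bd_gen _ _]ffunE big_distrl /= kappa_genE.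
rewrite exchange_big /= (eq_big_nat _ _ (F2 := fun i => (-1) ^+ i.+1 *
  (\prod_(0 <= j < N) splice (fun j => kappa_factor t j (sg (nth x0 u j)))
                             (fun j => kappa_factor t j.+1 (nth x0 u j)) i j -
   \prod_(0 <= j < N) splice (fun j => kappa_factor t j (nth x0 u j))
                             (fun j => kappa_factor t j.+1 (pi (nth x0 u j))) i j))).
  by rewrite (eq_bigr _ (fun i _ => mulrBr _ _ _)) sumrB !sum_alt_prod_splice mulrBr.
move=> i hi; under eq_bigr => s _ do rewrite -mulrA mulrBl.
have hsz : size t = N.+1 := size_tuple t.
pose kappa_u w := \prod_(0 <= j < N) kappa_factor w j (nth x0 u j).
rewrite -big_distrr sumrB /= !(sum_gen_mul kappa_u) ?size_dl ?size_dr ?hsz //.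
congr (_ * (_ - _)); apply: eq_big_nat => j /andP[_ hj].
  by rewrite (kappa_factor_dl _ hsz) //; lia.
by rewrite (kappa_factor_dr _ hsz) //; lia.
Qed.

Lemma bd_kappa_gen n (t : n.-tuple T) : bd (kappa_gen t) = kappa (bd_gen t).
Proof.
apply/ffunP; case: n t => [|N] t u; last by rewrite bd_kappa_genE kappa_bd_genE.
by rewrite !ffunE !big1 // => s _; rewrite !ffunE big_geq ?mulr0 ?mul0r.
Qed.

End KappaChainMap.

Unset Implicit Arguments.

Theorem mainTheorem4 (m n : nat) (c : chain m n) :
  bd (kappa c) = kappa (bd c).
Proof. by rewrite /bd /kappa !linext_comp; apply: eq_linext => t; exact: bd_kappa_gen. Qed.
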